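(* Let $T \subseteq \mathbb{Z}_2^\omega$ be a thin set such that $T\cap X\neq\emptyset$ for every equivalence class $X$ of the relation $\sim$ on $\mathbb{Z}_2^\omega$. Then $T$ is not a Borel subset of $\mathbb{Z}_2^\omega$.
   Context: $\mathbb{Z}_2^\omega$ is the Cantor cube of infinite binary sequences indexed by $\omega=\{0,1,2,\dots\}$, with the product (Tychonoff) topology. The Hamming distance is $\mathrm{hd}(x,y)=|\{k: x(k)\ne y(k)\}|\in\omega\cup\{\omega\}$, and $x\sim y$ iff $\mathrm{hd}(x,y)$ is finite. A set $T\subseteq\mathbb{Z}_2^\omega$ is thin if for every $n\in\omega$ the map $x\mapsto x|_{\omega\setminus\{n\}}$ is injective on $T$ (equivalently, no two distinct elements of $T$ differ in exactly one coordinate). *)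

From HB Require Import structures.
From mathcomp Require Import all_boot all_order all_algebra.
From mathcomp Require Import all_classical all_reals all_analysis.
Set Implicit Arguments. Unset Strict Implicit. Unset Printing Implicit Defensive.
Local Open Scope classical_set_scope.

(* Z_2^omega with the product topology is mathcomp-analysis' [cantor_space]
   (= prod_topology (fun _ : nat => bool)). *)

Definition borel_set (T : topologicalType) (A : set T) : Prop :=
  <<s open >> A.

Definition hamming_equiv (x y : cantor_space) : Prop :=
  finite_set [set k : nat | x k != y k].

(* Thin: for each n, x |-> x restricted to omega \ {n} is injective on T. *)
Definition thin (T : set cantor_space) : Prop :=
  forall (n : nat) (x y : cantor_space), T x -> T y ->
    (forall k : nat, k <> n -> x k = y k) -> x = y.

From HB Require Import structures.
From mathcomp Require Import all_boot all_order all_algebra.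
From mathcomp Require Import all_classical all_reals all_analysis.
Local Open Scope classical_set_scope.

(* Borel sets have the Baire property: they differ from an open set U by a
   meager set.  For a thin T, U must be empty: otherwise U contains a cylinder
   [u|n], on which flipping the n-th bit preserves meagerness, so a generic x
   of the cylinder has both x and its flip in T, against thinness.  Hence T is
   meager.  But if T meets every ~-class, the countably many finite flips of T
   cover the whole space, which contradicts the Baire category theorem.
   Openness, nowhere density and meagerness are all expressed through the
   cylinders [x|n] = [set z | agree n z x]. *)

Definition agree (n : nat) (x y : cantor_space) :=
  forall i, (i < n)%N -> x i = y i.

Lemma agree_trans {n x y z} : agree n x y -> agree n y z -> agree n x z.
Proof. by move=> xy yz i ni; rewrite xy // yz. Qed.

Lemma agree_le {m n x y} : (m <= n)%N -> agree n x y -> agree m x y.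
Proof. by move=> mn xy i im; apply: xy; apply: leq_trans im mn. Qed.

Definition cyl_open (U : set cantor_space) :=
  forall x, U x -> exists n, forall z, agree n z x -> U z.

Lemma open_cyl_open U : open U -> cyl_open U.
Proof.
move=> U_open x Ux; apply: contrapT => /forallNP noCyl.
have /choice[g gP] : forall n, exists g, agree n g x /\ ~ U g.
  by move=> n; have /existsNP[g /not_implyP] := noCyl n; exists g.
have g_cvg : g @ \oo --> x.
  apply/cvg_sup => i V [W] [[W'] _ <-] Wxi WV.
  apply: (filterS WV); exists i.+1 => // n /= ni.
  by rewrite (proj1 (gP n)).
have /g_cvg [n _ gU] : nbhs x U by apply: open_nbhs_nbhs.
exact: (proj2 (gP n)) (gU n (leqnn n)).
Qed.

Lemma cyl_open_bigcup (U : nat -> set cantor_space) :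
  (forall k, cyl_open (U k)) -> cyl_open (\bigcup_k U k).
Proof.
move=> U_open x [k _ Ukx]; have [n cylU] := U_open k x Ukx.
by exists n => z /cylU; exists k.
Qed.

Definition cyl_exterior (U : set cantor_space) :=
  [set x | exists n, forall z, agree n z x -> ~ U z].

Lemma cyl_open_exterior U : cyl_open (cyl_exterior U).
Proof.
move=> x [n cylU]; exists n => z zx; exists n => w wz.
exact: cylU (agree_trans wz zx).
Qed.

Definition nowhere_dense (A : set cantor_space) :=
  forall n y, exists m z, agree n z y /\ forall x, agree m x z -> ~ A x.

Definition meager (M : set cantor_space) :=
  exists B : nat -> set cantor_space,
    (forall k, nowhere_dense (B k)) /\ M `<=` \bigcup_k B k.

Lemma nowhere_dense0 : nowhere_dense set0.
Proof. by move=> n y; exists n, y; split=> [i _ |x _ []]. Qed.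

Lemma nowhere_dense_frontier U :
  cyl_open U -> nowhere_dense (~` U `&` ~` cyl_exterior U).
Proof.
move=> U_open n y.
have [[z [zy Uz]]|noU] := pselect (exists z, agree n z y /\ U z).
  have [m cylU] := U_open z Uz.
  by exists m, z; split=> // x /cylU Ux [].
exists n, y; split=> // x xy [_]; apply; exists n => z zx Uz.
by apply: noU; exists z; split=> //; apply: agree_trans zx xy.
Qed.

Lemma nowhere_dense_step {A} : nowhere_dense A ->
  forall n y, exists m z,
    [/\ (n < m)%N, agree n z y & forall x, agree m x z -> ~ A x].
Proof.
move=> A_nwd n y; have [m [z [zy Az]]] := A_nwd n y.
exists (maxn m n.+1), z; split=> //; first exact: leq_maxr.
by move=> x /(agree_le (leq_maxl _ _)); apply: Az.
Qed.

Lemma agree_limit {m : nat -> nat} {z : nat -> cantor_space} :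
  (forall k, (m k < m k.+1)%N) -> (forall k, agree (m k) (z k.+1) (z k)) ->
  exists x, forall k, agree (m k) x (z k).
Proof.
move=> m_incr zS.
have m_mono : {homo m : k l / (k <= l)%N}.
  by apply: homo_leq => [//||k]; [apply: leq_trans | apply: ltnW].
have m_ge k : (k <= m k)%N.
  by elim: k => // k IH; apply: leq_ltn_trans IH (m_incr k).
have z_chain k l : (k <= l)%N -> agree (m k) (z l) (z k).
  elim: l => [|l IH]; first by rewrite leqn0 => /eqP->.
  rewrite leq_eqVlt ltnS => /predU1P[-> //|kl].
  exact: agree_trans (agree_le (m_mono _ _ kl) (zS l)) (IH kl).
exists (fun i => z i.+1 i) => k i ik /=.
rewrite -(z_chain k (maxn k i.+1) (leq_maxl _ _) i ik).
by rewrite (z_chain i.+1 (maxn k i.+1) (leq_maxr _ _)) // (m_ge i.+1).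
Qed.

Theorem baire {M} : meager M -> forall n y, exists2 x, agree n x y & ~ M x.
Proof.
move=> [B [B_nwd MB]] n y.
have /choice[f fP] : forall kp : nat * (nat * cantor_space),
    exists q : nat * cantor_space, [/\ (kp.2.1 < q.1)%N,
      agree kp.2.1 q.2 kp.2.2 & forall x, agree q.1 x q.2 -> ~ B kp.1 x].
  move=> [k [n0 y0]]; have [m [z mz]] := nowhere_dense_step (B_nwd k) n0 y0.
  by exists (m, z).
pose p := fix p k := if k is k'.+1 then f (k', p k') else (n, y).
have p_incr k : ((p k).1 < (p k.+1).1)%N by case: (fP (k, p k)).
have p_agree k : agree (p k).1 (p k.+1).2 (p k).2 by case: (fP (k, p k)).
have p_avoid k x : agree (p k.+1).1 x (p k.+1).2 -> ~ B k x.
  by case: (fP (k, p k)) => _ _; apply.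
have [x xp] := agree_limit p_incr p_agree.
exists x; first exact: xp 0.
by move=> /MB [k _]; apply: p_avoid (xp k.+1).
Qed.

Lemma not_meager_setT : ~ meager setT.
Proof. by move=> /baire /(_ 0 point) [x _]; apply. Qed.

Lemma meager0 : meager set0.
Proof. by exists (fun=> set0); split=> // _; apply: nowhere_dense0. Qed.

Lemma meager_sub {M M'} : M' `<=` M -> meager M -> meager M'.
Proof.
by move=> M'M [B [B_nwd MB]]; exists B; split=> // x /M'M /MB.
Qed.

Lemma meager_bigcup {I : countType} {M : I -> set cantor_space} :
  (forall i, meager (M i)) -> meager (\bigcup_i M i).
Proof.
move=> /choice[B BP].
exists (fun j => if @unpickle (I * nat)%type j is Some (i, k) then B i k else set0).
split=> [j|x [i _ /(BP i).2 [k _ Bikx]]].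
  by case: unpickle => [[i k]|]; [apply: (BP i).1 | apply: nowhere_dense0].
by exists (pickle (i, k)); rewrite ?pickleK.
Qed.

Lemma meagerU {M1 M2} : meager M1 -> meager M2 -> meager (M1 `|` M2).
Proof.
move=> M1_meager M2_meager.
apply: meager_sub (@meager_bigcup bool (fun b => if b then M1 else M2) _).
  by move=> x [M1x|M2x]; [exists true | exists false].
by case.
Qed.

Definition toggle (s : seq nat) (x : cantor_space) : cantor_space :=
  fun i => x i (+) (i \in s).

Lemma toggleK s : involutive (toggle s).
Proof. by move=> x; apply: funext => i; rewrite /toggle addbK. Qed.

Lemma agree_toggle {n s x y} : agree n x (toggle s y) -> agree n (toggle s x) y.
Proof. by move=> xy i ni; rewrite /toggle xy // /toggle addbK. Qed.

Lemma meager_toggle s {M} : meager M -> meager (toggle s @^-1` M).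
Proof.
move=> [B [B_nwd MB]]; exists (fun k => toggle s @^-1` B k).
split=> [k n y|x /MB //].
have [m [z [zy Bz]]] := B_nwd k n (toggle s y).
exists m, (toggle s z); split; first exact: agree_toggle.
by move=> x /agree_toggle; apply: Bz.
Qed.

Lemma hamming_toggle t x : hamming_equiv t x -> exists s, t = toggle s x.
Proof.
move=> /finite_seqP[s diff_s]; exists s; apply: funext => i.
have := congr1 (@^~ i) diff_s; rewrite /toggle /= => /is_true_inj.
by case: (t i); case: (x i); case: (i \in s).
Qed.

Definition baire_property (A : set cantor_space) :=
  exists2 U, cyl_open U & meager (A `+` U).

Lemma baire_propertyC A : baire_property A -> baire_property (~` A).
Proof.
move=> [U U_open AU]; exists (cyl_exterior U); first exact: cyl_open_exterior.
have frontier_meager : meager (~` U `&` ~` cyl_exterior U).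
  exists (fun=> ~` U `&` ~` cyl_exterior U).
  by split=> [_|x ?]; [apply: nowhere_dense_frontier | exists 0].
apply: meager_sub (meagerU AU frontier_meager) => x /=.
have [Ux|nUx] := pselect (U x).
  by move=> [[nAx _]|[[n extU] _]]; [left; right | exfalso; apply: extU Ux].
move=> [[nAx nEx]|[[n extU] nnAx]]; first by right.
by left; left; split=> //; apply: contrapT.
Qed.

Lemma baire_property_bigcup (A : nat -> set cantor_space) :
  (forall k, baire_property (A k)) -> baire_property (\bigcup_k A k).
Proof.
move=> A_baire.
have /choice[U UP] : forall k, exists U, cyl_open U /\ meager (A k `+` U).
  by move=> k; have [U ? ?] := A_baire k; exists U.
exists (\bigcup_k U k); first by apply: cyl_open_bigcup => k; case: (UP k).
apply: meager_sub (meager_bigcup (fun k => (UP k).2)) => x.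
move=> [[[k _ Akx] nUx]|[[k _ Ukx] nAx]]; exists k => //.
  by left; split=> // Ukx; apply: nUx; exists k.
by right; split=> // Akx; apply: nAx; exists k.
Qed.

Lemma borel_baire_property A : borel_set A -> baire_property A.
Proof.
move: A; apply: (@smallest_sub _ _ _ baire_property); first split.
- by exists set0; rewrite ?setY0; [move=> x [] | apply: meager0].
- by move=> B /baire_propertyC; rewrite setTD.
- exact: baire_property_bigcup.
- by move=> U /open_cyl_open U_open; exists U; rewrite // setYK; apply: meager0.
Qed.

Lemma thin_toggle1 {T n x} : thin T -> T x -> ~ T (toggle [:: n] x).
Proof.
move=> T_thin Tx Tx'.
have x_fixed : x = toggle [:: n] x.
  apply: (T_thin n) Tx Tx' _ => k /eqP kn.
  by rewrite /toggle inE (negbTE kn) addbF.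
by have := congr1 (@^~ n) x_fixed; rewrite /toggle inE eqxx addbT; case: (x n).
Qed.

Lemma agree_toggle1 n x : agree n (toggle [:: n] x) x.
Proof. by move=> i ni; rewrite /toggle inE (ltn_eqF ni) addbF. Qed.

Lemma thin_baire_meager {T} : thin T -> baire_property T -> meager T.
Proof.
move=> T_thin [U U_open TU].
suff U0 : U = set0 by move: TU; rewrite U0 setY0.
apply/seteqP; split=> // u Uu; exfalso.
have [n cylU] := U_open u Uu.
have [x xu] := baire (meagerU TU (meager_toggle [:: n] TU)) n u.
have T_of_U y : ~ (T `+` U) y -> U y -> T y.
  by move=> TUy Uy; apply: contrapT => nTy; apply: TUy; right.
move=> /not_orP[TUx TUx'].
have x'u : agree n (toggle [:: n] x) u := agree_trans (agree_toggle1 n x) xu.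
exact: thin_toggle1 T_thin (T_of_U _ TUx (cylU _ xu)) (T_of_U _ TUx' (cylU _ x'u)).
Qed.

Lemma transversal_not_meager T :
  (forall x, exists t, T t /\ hamming_equiv t x) -> ~ meager T.
Proof.
move=> T_meets T_meager; apply: not_meager_setT.
apply: meager_sub (meager_bigcup (fun s => meager_toggle s T_meager)) => x _.
have [t [Tt /hamming_toggle [s t_def]]] := T_meets x.
by exists s; rewrite // /preimage /= -t_def.
Qed.

Theorem theorem9 (T : set cantor_space) :
  thin T ->
  (forall x : cantor_space, exists t : cantor_space, T t /\ hamming_equiv t x) ->
  ~ borel_set T.
Proof.
move=> T_thin T_meets /borel_baire_property /(thin_baire_meager T_thin).
exact: transversal_not_meager.
Qed.
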